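(* Let $L\ge1$, $D\ge1$, and for $\mathbf{u}=[\mathbf{u}_l]_{l=1}^L$ with $\mathbf{u}_l\in\mathbb{R}^D$ let $\mathcal{P}_{conv}(\mathbf{u})\in\mathbb{R}^D$ be the vector with $\langle\mathbf{x},\mathcal{P}_{conv}(\mathbf{u})\rangle=\big((((\mathbf{x}\star\mathbf{u}_1)\star\mathbf{u}_2)\cdots)\star\mathbf{u}_{L-1}\big)^\top\mathbf{u}_L$ for all $\mathbf{x}\in\mathbb{R}^D$. Then for every $\mathbf{w}\in\mathbb{R}^D$, $$\mathcal{R}_{\mathcal{P}_{conv}}(\mathbf{w}):=\min_{\mathbf{u}:\mathcal{P}_{conv}(\mathbf{u})=\mathbf{w}}\|\mathbf{u}\|_2^2=L\|\hat{\mathbf{w}}\|_{2/L}^{2/L}.$$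
   Context: Indices run over $0,\dots,D-1$. $(\mathbf{h}\star\mathbf{u})[d]=\frac{1}{\sqrt D}\sum_{k=0}^{D-1}\mathbf{u}[k]\mathbf{h}[(d+k)\bmod D]$. $\hat{\mathbf{w}}[d]=\frac{1}{\sqrt D}\sum_{p=0}^{D-1}\mathbf{w}[p]e^{-2\pi\mathrm{i}pd/D}$. $\|\mathbf{u}\|_2^2=\sum_l\|\mathbf{u}_l\|_2^2$; for $p>0$ and $\mathbf{z}\in\mathbb{C}^D$, $\|\mathbf{z}\|_p=(\sum_d|\mathbf{z}[d]|^p)^{1/p}$. *)

From HB Require Import structures.
From mathcomp Require Import all_boot all_order all_algebra.
From mathcomp Require Import all_classical all_reals all_analysis.
Set Implicit Arguments. Unset Strict Implicit. Unset Printing Implicit Defensive.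
Import Order.TTheory GRing.Theory Num.Theory.
Local Open Scope ring_scope.

Section Defs.
Variable R : realType.

Definition cyc (D : nat) (h : 'rV[R]_D) (n : nat) : R :=
  if @insub nat (fun m => (m < D)%N) 'I_D (n %% D)%N is Some i then h 0 i else 0.

Definition dotv (D : nat) (x y : 'rV[R]_D) : R := \sum_(d < D) x 0 d * y 0 d.

Definition star (D : nat) (h u : 'rV[R]_D) : 'rV[R]_D :=
  \row_(d < D) ((Num.sqrt (D%:R))^-1 * \sum_(k < D) u 0 k * cyc h (d + k)%N).

(* x |-> ((((x * u_1) * u_2) ...) * u_{L-1})^T u_L  (u_1..u_L indexed by 'I_L) *)
Definition Pform (L D : nat) (u : 'I_L -> 'rV[R]_D) (x : 'rV[R]_D) : R :=
  match enum 'I_L with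
  | [::] => 0
  | l0 :: s => dotv (foldl (fun acc l => star acc (u l)) x (belast l0 s)) (u (last l0 s))
  end.

(* P_conv(u): the vector with <x, P_conv(u)> = Pform u x for all x
   (its i-th entry is the form evaluated at the i-th standard basis vector). *)
Definition Pconv (L D : nat) (u : 'I_L -> 'rV[R]_D) : 'rV[R]_D :=
  \row_(i < D) Pform u (delta_mx 0 i).

Definition sqnorm (L D : nat) (u : 'I_L -> 'rV[R]_D) : R :=
  \sum_(l < L) \sum_(d < D) (u l 0 d) ^+ 2.

(* DFT: w^[d] = 1/sqrt D * sum_p w[p] e^{-2 pi i p d / D} = re + i im *)
Definition dft_re (D : nat) (w : 'rV[R]_D) (d : 'I_D) : R :=
  (Num.sqrt (D%:R))^-1 *
  \sum_(p < D) w 0 p * cos (2 * pi * (p%:R) * (d%:R) / D%:R).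
Definition dft_im (D : nat) (w : 'rV[R]_D) (d : 'I_D) : R :=
  (Num.sqrt (D%:R))^-1 *
  \sum_(p < D) w 0 p * - sin (2 * pi * (p%:R) * (d%:R) / D%:R).
Definition dft_abs (D : nat) (w : 'rV[R]_D) (d : 'I_D) : R :=
  Num.sqrt (dft_re w d ^+ 2 + dft_im w d ^+ 2).

Definition quasinorm_pow (D : nat) (w : 'rV[R]_D) (p : R) : R :=
  \sum_(d < D) (dft_abs w d) `^ p.

End Defs.

(* The unitary DFT turns circular correlation into the pointwise product
   [(h * u)^ = h^ . conj u^], so P_conv(u) has spectrum [prod_l u_l^] and, by
   Parseval, [||u||^2 = sum_m sum_l |u_l^[m]|^2].  At each frequency AM-GM gives
   [sum_l |u_l^[m]|^2 >= L (prod_l |u_l^[m]|)^(2/L) = L |w^[m]|^(2/L)], with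
   equality when every factor has modulus [|w^[m]|^(1/L)].  Such balanced
   factors can be chosen Hermitian-symmetric, so they are spectra of real
   vectors. *)

From HB Require Import structures.
From mathcomp Require Import all_boot all_order all_algebra.
From mathcomp Require Import all_classical all_reals all_analysis.
From mathcomp Require Import complex.
From mathcomp Require Import ring lra.
Import Order.TTheory GRing.Theory Num.Theory.
Local Open Scope complex_scope.
Local Open Scope ring_scope.
Set Implicit Arguments. Unset Strict Implicit. Unset Printing Implicit Defensive.

Local Notation normc := Normc.normc.

Lemma sum_expr_unity_root (F : idomainType) n (z : F) :
  z ^+ n = 1 -> z != 1 -> \sum_(i < n) z ^+ i = 0.
Proof.
move=> zn1 z_neq1; have /esym/eqP := subrX1 z n.
by rewrite zn1 subrr mulf_eq0 subr_eq0 (negbTE z_neq1) => /eqP.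
Qed.

Lemma prim_root_sum_expr (F : fieldType) n (z : F) (k m : nat) :
  n.-primitive_root z -> (k < n)%N -> (m < n)%N ->
  \sum_(i < n) (z ^+ k / z ^+ m) ^+ i = (k == m)%:R * n%:R.
Proof.
move=> prim_z lt_k lt_m; have z_neq0 : z != 0.
  by rewrite (prim_root_eq0 prim_z) -lt0n (prim_order_gt0 prim_z).
have [<-|neq_km] := eqVneq k m.
  rewrite divff ?expf_neq0 // (eq_bigr (fun=> 1)) => [|i _]; last exact: expr1n.
  by rewrite sumr_const card_ord mul1r.
rewrite mul0r; apply: sum_expr_unity_root.
  rewrite expr_div_n -!exprM !(mulnC _ n) !exprM (prim_expr_order prim_z).
  by rewrite !expr1n divr1.
apply: contra_neq neq_km => /divr1_eq/eqP.
by rewrite (eq_prim_root_expr prim_z) !modn_small // => /eqP.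
Qed.

Lemma prim_expr_mulr_mod (F : nzRingType) n (z : F) k m :
  n.-primitive_root z -> z ^+ (k * (m %% n)) = z ^+ (k * m).
Proof.
by move=> prim_z; rewrite -(prim_expr_mod prim_z) modnMmr (prim_expr_mod prim_z).
Qed.

Lemma cos_lt1 (R : realType) (x : R) : 0 < x < pi *+ 2 -> cos x < 1.
Proof.
move=> /andP[x_gt0 x_lt2pi]; have -> : x = (x / 2) *+ 2 by rewrite -mulr_natr divfK.
have sin_gt0 : 0 < sin (x / 2).
  by apply: sin_gt0_pi; rewrite divr_gt0 //= ltr_pdivrMr // mulr_natr.
have := exprn_gt0 2 sin_gt0; rewrite cos_mulr2n cos2sin2 mulr2n; lra.
Qed.

Lemma complex_mulE (R : rcfType) (a b c d : R) :
  (a +i* b) * (c +i* d) = (a * c - b * d) +i* (a * d + b * c).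
Proof. by []. Qed.

Lemma sum_complex (R : rcfType) (I : finType) (f g : I -> R) :
  \sum_i (f i +i* g i) = (\sum_i f i) +i* (\sum_i g i).
Proof. by elim/big_rec3: _ => // i x y z _ ->. Qed.

Lemma normc_sqr (R : rcfType) (z : R[i]) : ((normc z) ^+ 2)%:C = z * z^*%C.
Proof.
case: z => a b; rewrite /= sqr_sqrtr ?addr_ge0 ?sqr_ge0 // -complexr0 complex_mulE.
by congr (_ +i* _)%C; ring.
Qed.

Lemma normc_ge0 (R : rcfType) (z : R[i]) : 0 <= normc z.
Proof. by case: z => a b; apply: sqrtr_ge0. Qed.

Lemma normc_conj (R : rcfType) (z : R[i]) : normc z^*%C = normc z.
Proof. by case: z => a b /=; rewrite sqrrN. Qed.

Lemma normc_real (R : rcfType) (x : R) : 0 <= x -> normc x%:C = x.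
Proof. by move=> x_ge0 /=; rewrite expr0n /= addr0 sqrtr_sqr ger0_norm. Qed.

Lemma normc_divr_exprS (R : rcfType) (z : R[i]) (r : R) n :
  0 <= r -> normc z = r ^+ n.+1 ->
  z / (r ^+ n)%:C * (r ^+ n)%:C = z /\ normc (z / (r ^+ n)%:C) = r.
Proof.
move=> r_ge0 norm_z; have [r0|r_neq0] := eqVneq r 0.
  have -> : z = 0 by apply: Normc.eq0_normc; rewrite norm_z r0 expr0n.
  by rewrite !mul0r Normc.normc0 r0.
split; first by rewrite divfK // fmorph_eq0 expf_neq0.
rewrite Normc.normcM Normc.normcV normc_real ?exprn_ge0 // norm_z exprS.
by rewrite mulfK ?expf_neq0.
Qed.

Lemma normc_prod (R : rcfType) (I : finType) (f : I -> R[i]) :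
  normc (\prod_i f i) = \prod_i normc (f i).
Proof. exact: (big_morph _ (@Normc.normcM R) (@Normc.normc1 R)). Qed.

Section Expi.
Variable R : realType.

Definition expi (x : R) : R[i] := cos x +i* sin x.

Lemma expi0 : expi 0 = 1.
Proof. by rewrite /expi cos0 sin0. Qed.

Lemma expiD x y : expi (x + y) = expi x * expi y.
Proof. by rewrite /expi complex_mulE cosD sinD [sin x * _ + _]addrC. Qed.

Lemma expiX x n : expi x ^+ n = expi (x *+ n).
Proof.
elim: n => [|n IH]; first by rewrite expr0 mulr0n expi0.
by rewrite exprS IH mulrS expiD.
Qed.

Lemma expi_mulJ x : expi x * (expi x)^*%C = 1.
Proof.
by rewrite /expi complex_mulE mulrN opprK -!expr2 cos2Dsin2 mulrN mulrC addNr.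
Qed.

Lemma expi_eq1 x : 0 < x < pi *+ 2 -> expi x != 1.
Proof. by move=> /cos_lt1; apply: contraTneq => -[->]; rewrite ltxx. Qed.

End Expi.

Section RootOfUnity.
Variables (R : realType) (D : nat).
Hypothesis D_gt0 : (0 < D)%N.
Local Notation C := R[i].

Definition omega : C := expi (2 * pi / D%:R).

Lemma omega_neq0 : omega != 0.
Proof.
apply/eqP => omega0; have : omega * omega^*%C = 1 := expi_mulJ _.
by rewrite omega0 mul0r => /eqP; rewrite eq_sym oner_eq0.
Qed.

Lemma conj_omega : omega^*%C = omega^-1.
Proof. by apply: (mulfI omega_neq0); rewrite expi_mulJ mulfV ?omega_neq0. Qed.

Lemma omega_prim : D.-primitive_root omega.
Proof.
apply/andP; split=> //; apply/forallP => i; apply/eqP; rewrite unity_rootE /omega expiX.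
have [->|neq_iD] := eqVneq i.+1 D.
  rewrite -[_ *+ D]mulr_natr divfK ?pnatr_eq0 -?lt0n // mulr_natl.
  by rewrite /expi cos2pi sin2pi eqxx.
apply/negbTE/expi_eq1; rewrite mulrn_wgt0 ?divr_gt0 ?mulr_gt0 ?ltr0n ?pi_gt0 //=.
have lt_iD : (i.+1 < D)%N by rewrite ltn_neqAle neq_iD ltn_ord.
rewrite -[_ *+ i.+1]mulr_natr -[pi *+ 2]mulr_natl mulrAC ltr_pdivrMr ?ltr0n //.
by rewrite ltr_pM2l ?mulr_gt0 ?pi_gt0 // ltr_nat.
Qed.

Lemma omegaV_prim : D.-primitive_root omega^-1.
Proof. by rewrite -conj_omega fmorph_primitive_root omega_prim. Qed.

End RootOfUnity.

Section DFT.
Variables (R : realType) (D : nat).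
Hypothesis D_gt0 : (0 < D)%N.
Local Notation C := R[i].

Definition fourier_scale : C := ((Num.sqrt (D%:R : R))^-1)%:C.

Lemma fourier_scale_sqr : fourier_scale ^+ 2 * D%:R = 1.
Proof.
rewrite -rmorphXn -(rmorph_nat (real_complex R)) -rmorphM exprVn sqr_sqrtr ?ler0n //.
by rewrite mulVf ?pnatr_eq0 -?lt0n.
Qed.

Definition fourier (z : C) (a : 'I_D -> C) (m : 'I_D) : C :=
  fourier_scale * \sum_(p < D) a p * z ^+ (p * m).

Lemma sum_fourierC z (a b : 'I_D -> C) :
  \sum_(m < D) fourier z a m * b m = \sum_(p < D) a p * fourier z b p.
Proof.
rewrite /fourier; under eq_bigr do rewrite -mulrA mulr_suml.
under [RHS]eq_bigr do rewrite mulrCA mulr_sumr.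
rewrite -!mulr_sumr exchange_big /=; congr (_ * _).
by apply: eq_bigr => p _; apply: eq_bigr => m _; rewrite [(m * p)%N]mulnC; ring.
Qed.

Lemma fourierK z : D.-primitive_root z -> cancel (fourier z^-1) (fourier z).
Proof.
move=> prim_z a; apply/funext => m; rewrite /fourier.
have ratio_exp (k p : 'I_D) : z^-1 ^+ (k * p) * z ^+ (p * m) = (z ^+ m / z ^+ k) ^+ p.
  by rewrite exprVn expr_div_n -!exprM mulrC (mulnC p m) (mulnC k p).
under eq_bigr do rewrite -mulrA mulr_suml.
rewrite -mulr_sumr exchange_big /=.
under eq_bigr => k _ do under eq_bigr => p _ do rewrite -mulrA ratio_exp.
under eq_bigr => k _ do rewrite -mulr_sumr prim_root_sum_expr //.
rewrite (bigD1 m) //= eqxx big1 => [|k neq_km]; last first.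
  by rewrite val_eqE eq_sym (negbTE neq_km) mul0r mulr0.
by rewrite addr0 mul1r mulrA mulrCA -expr2 fourier_scale_sqr mulr1.
Qed.

Lemma conj_fourier z a m :
  (fourier z a m)^*%C = fourier z^*%C (fun p => (a p)^*%C) m.
Proof.
rewrite /fourier rmorphM rmorph_sum /=; congr (_ * _); first exact: conjc_real.
by apply: eq_bigr => p _; rewrite rmorphM rmorphXn.
Qed.

Definition dft := fourier (omega R D)^-1.
Definition idft := fourier (omega R D).

Lemma dftK : cancel dft idft.
Proof. exact: fourierK (omega_prim R D_gt0). Qed.

Lemma idftK : cancel idft dft.
Proof. by move=> a; have := fourierK (omegaV_prim R D_gt0) a; rewrite invrK. Qed.

Lemma conj_dft a m : (dft a m)^*%C = idft (fun p => (a p)^*%C) m.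
Proof. by rewrite conj_fourier conjc_inv conj_omega // invrK. Qed.

Lemma parseval (a b : 'I_D -> C) :
  \sum_(p < D) a p * (b p)^*%C = \sum_(m < D) dft a m * (dft b m)^*%C.
Proof.
under [RHS]eq_bigr do rewrite conj_dft.
by rewrite sum_fourierC -/dft idftK.
Qed.

Lemma conj_idft a m : (idft a m)^*%C = dft (fun p => (a p)^*%C) m.
Proof. by rewrite conj_fourier conj_omega. Qed.

Definition ord_opp (m : 'I_D) : 'I_D := Ordinal (ltn_pmod (D - m) D_gt0).

Lemma ord_oppK : involutive ord_opp.
Proof.
move=> m; apply: val_inj => /=; have [->|m_gt0] := posnP m.
  by rewrite subn0 modnn subn0 modnn.
rewrite (@modn_small (D - m)); last by rewrite ltn_subrL m_gt0 D_gt0.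
by rewrite subKn ?modn_small // ltnW.
Qed.

Lemma prim_expr_opp (z : C) p m : D.-primitive_root z ->
  z ^+ (p * ord_opp m) = (z ^+ (p * m))^-1.
Proof.
move=> prim_z; have z_neq0 : z != 0.
  by rewrite (prim_root_eq0 prim_z) -lt0n.
rewrite -[nat_of_ord (ord_opp m)]/((D - m) %% D)%N prim_expr_mulr_mod //.
apply: (mulIf (expf_neq0 (p * m) z_neq0)).
rewrite mulVf ?expf_neq0 // -exprD -mulnDr subnK; last exact: ltnW.
by rewrite mulnC exprM (prim_expr_order prim_z) expr1n.
Qed.

Definition hermitian (z : 'I_D -> C) := forall m, z (ord_opp m) = (z m)^*%C.

Lemma conj_idft_hermitian z p : hermitian z -> (idft z p)^*%C = idft z p.
Proof.
move=> herm_z; rewrite conj_idft /dft /idft /fourier; congr (_ * _).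
rewrite [RHS](reindex_inj (can_inj ord_oppK)); apply: eq_bigr => m _.
rewrite herm_z [(ord_opp m * p)%N]mulnC prim_expr_opp ?omega_prim //.
by rewrite exprVn [(m * p)%N]mulnC.
Qed.

End DFT.

Section RealSignals.
Variables (R : realType) (D : nat).
Hypothesis D_gt0 : (0 < D)%N.
Local Notation C := R[i].

Definition crow (a : 'rV[R]_D) (p : 'I_D) : C := (a 0 p)%:C.

Lemma crow_inj : injective crow.
Proof.
move=> a b eq_ab; apply/rowP => p; apply: complexI.
exact: (congr1 (fun f => f p) eq_ab).
Qed.

Lemma conj_dft_crow a m : (dft (crow a) m)^*%C = idft (crow a) m.
Proof. by rewrite conj_dft; congr (idft _ m); apply/funext => p; apply: conjc_real. Qed.

Lemma sum_crow_delta (i : 'I_D) (f : 'I_D -> C) :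
  \sum_(p < D) crow (delta_mx 0 i) p * f p = f i.
Proof.
rewrite (bigD1 i) //= /crow mxE !eqxx mul1r big1 ?addr0 // => p neq_pi.
by rewrite mxE (negbTE neq_pi) andbF rmorph0 mul0r.
Qed.

Lemma cycE (h : 'rV[R]_D) n : cyc h n = h 0 (Ordinal (ltn_pmod n D_gt0)).
Proof.
rewrite /cyc; case: insubP => [i _ val_i|]; last by rewrite ltn_pmod.
by congr (h 0 _); apply: val_inj; rewrite /= val_i.
Qed.

Lemma cyc_idft (h : 'rV[R]_D) n :
  (cyc h n)%:C = fourier_scale R D * \sum_(m < D) dft (crow h) m * omega R D ^+ (m * n).
Proof.
rewrite cycE; transitivity (idft (dft (crow h)) (Ordinal (ltn_pmod n D_gt0))).
  by rewrite dftK.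
rewrite /idft /fourier; congr (_ * _); apply: eq_bigr => m _.
by rewrite /= prim_expr_mulr_mod // omega_prim.
Qed.

Lemma crow_star (h v : 'rV[R]_D) :
  crow (star h v) = idft (fun m => dft (crow h) m * (dft (crow v) m)^*%C).
Proof.
apply/funext => d; rewrite {1}/crow /star mxE rmorphM rmorph_sum /= /idft /fourier.
congr (_ * _).
under eq_bigr do rewrite rmorphM /= cyc_idft !mulr_sumr.
under [RHS]eq_bigr do rewrite conj_dft_crow /idft /fourier /crow !mulr_sumr mulr_suml.
rewrite exchange_big /=; apply: eq_bigr => k _; apply: eq_bigr => m _.
by rewrite mulnDr exprD [(k * m)%N]mulnC; ring.
Qed.

Lemma dft_star (h v : 'rV[R]_D) m :
  dft (crow (star h v)) m = dft (crow h) m * (dft (crow v) m)^*%C.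
Proof. by rewrite crow_star idftK. Qed.

Lemma dft_foldl_star (I : Type) (u : I -> 'rV[R]_D) (s : seq I) x m :
  dft (crow (foldl (fun acc l => star acc (u l)) x s)) m
  = dft (crow x) m * \prod_(l <- s) (dft (crow (u l)) m)^*%C.
Proof.
elim: s x => [|l s IH] x /=; first by rewrite big_nil mulr1.
by rewrite IH big_cons mulrA dft_star.
Qed.

Lemma dotv_dft (a b : 'rV[R]_D) :
  (dotv a b)%:C = \sum_(m < D) dft (crow a) m * (dft (crow b) m)^*%C.
Proof.
rewrite /dotv rmorph_sum -(parseval D_gt0); apply: eq_bigr => p _.
by rewrite rmorphM /crow conjc_real.
Qed.

Lemma Pform_dft (L : nat) (u : 'I_L -> 'rV[R]_D) x : (0 < L)%N ->
  (Pform u x)%:C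
  = \sum_(m < D) dft (crow x) m * (\prod_(l < L) dft (crow (u l)) m)^*%C.
Proof.
move=> L_gt0; rewrite /Pform; case E: (enum 'I_L) => [|l0 s].
  by have := size_enum_ord L; rewrite E => /= L0; rewrite -L0 in L_gt0.
rewrite dotv_dft; apply: eq_bigr => m _; rewrite dft_foldl_star -mulrA rmorph_prod.
by rewrite -big_enum /= E lastI -cats1 big_cat big_seq1.
Qed.

Lemma crow_Pconv (L : nat) (u : 'I_L -> 'rV[R]_D) : (0 < L)%N ->
  crow (Pconv u) = idft (fun m => \prod_(l < L) dft (crow (u l)) m).
Proof.
move=> L_gt0; apply/funext => i; apply: (can_inj (@conjcK R)).
rewrite conjc_real /Pconv mxE Pform_dft // sum_fourierC -/dft.
by rewrite sum_crow_delta conj_idft.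
Qed.

Lemma dft_Pconv (L : nat) (u : 'I_L -> 'rV[R]_D) m : (0 < L)%N ->
  dft (crow (Pconv u)) m = \prod_(l < L) dft (crow (u l)) m.
Proof. by move=> L_gt0; rewrite crow_Pconv // idftK. Qed.

Lemma dft_crowE a m : dft (crow a) m = dft_re a m +i* dft_im a m.
Proof.
have angle (p : 'I_D) : 2 * pi / D%:R *+ (p * m) = 2 * pi * p%:R * m%:R / D%:R.
  by rewrite -mulr_natr natrM; ring.
rewrite /dft /fourier -conj_omega.
under eq_bigr => p _ do
  rewrite -rmorphXn /= expiX /expi /= /crow complex_mulE !mul0r subr0 addr0 angle.
by rewrite sum_complex complex_mulE !mul0r subr0 addr0.
Qed.

Lemma dft_absE a m : dft_abs a m = normc (dft (crow a) m).
Proof. by rewrite dft_crowE. Qed.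

Lemma sum_sqr_dft (a : 'rV[R]_D) :
  \sum_(d < D) a 0 d ^+ 2 = \sum_(m < D) normc (dft (crow a) m) ^+ 2.
Proof.
apply: complexI; rewrite !rmorph_sum.
rewrite [RHS](eq_bigr (fun m => dft (crow a) m * (dft (crow a) m)^*%C)) => [|m _].
  rewrite -(parseval D_gt0); apply: eq_bigr => p _.
  by rewrite rmorphXn /crow conjc_real expr2.
by move: (dft (crow a) m) => z; apply: normc_sqr.
Qed.

Lemma dft_crow_hermitian a : hermitian D_gt0 (dft (crow a)).
Proof.
move=> m; rewrite conj_dft_crow /dft /idft /fourier; congr (_ * _).
apply: eq_bigr => p _.
by rewrite prim_expr_opp ?omegaV_prim // exprVn invrK.
Qed.

Definition real_idft (z : 'I_D -> C) : 'rV[R]_D := \row_(p < D) complex.Re (idft z p).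

Lemma dft_real_idft z : hermitian D_gt0 z -> dft (crow (real_idft z)) = z.
Proof.
move=> herm_z; rewrite -[RHS](idftK D_gt0); congr dft; apply/funext => p.
rewrite /crow mxE ReJ_add conj_idft_hermitian //.
by rewrite -[_ + _]mulr2n -[_ *+ 2]mulr_natr mulfK ?pnatr_eq0.
Qed.

End RealSignals.

Lemma powR_exprK (R : realType) (x : R) n :
  0 <= x -> (0 < n)%N -> (x ^+ n) `^ (n%:R^-1) = x.
Proof.
move=> x_ge0 n_gt0; rewrite -powR_mulrn // -powRrM mulfV ?powRr1 //.
by rewrite pnatr_eq0 -lt0n.
Qed.

Lemma expr_powRK (R : realType) (x : R) n :
  0 <= x -> (0 < n)%N -> (x `^ (n%:R^-1)) ^+ n = x.
Proof.
move=> x_ge0 n_gt0; rewrite -powR_mulrn ?powR_ge0 // -powRrM mulVf ?powRr1 //.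
by rewrite pnatr_eq0 -lt0n.
Qed.

Lemma sqr_powR_invn (R : realType) (x : R) n : (x `^ (n%:R^-1)) ^+ 2 = x `^ (2 / n%:R).
Proof. by rewrite -powR_mulrn ?powR_ge0 // -powRrM mulrC. Qed.

Lemma powR_invn_sqr (R : realType) (x : R) n :
  0 <= x -> (x ^+ 2) `^ (n%:R^-1) = x `^ (2 / n%:R).
Proof. by move=> x_ge0; rewrite -powR_mulrn // -powRrM. Qed.

Lemma mean_ge_prod_powR (R : realType) n (x : 'I_n -> R) :
  (0 < n)%N -> (forall i, 0 <= x i) ->
  n%:R * (\prod_i x i) `^ (n%:R^-1) <= \sum_i x i.
Proof.
move=> n_gt0 x_ge0; have n_pos : (0 : R) < n%:R by rewrite ltr0n.
have mean_ge0 : 0 <= (\sum_i x i) / n%:R by rewrite divr_ge0 ?sumr_ge0 ?ler0n.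
suff le_mean : (\prod_i x i) `^ (n%:R^-1) <= (\sum_i x i) / n%:R.
  by apply: le_trans (ler_wpM2l (ler0n _ n) le_mean) _; rewrite mulrC divfK ?gt_eqF.
have agm := (@leif_AGM R 'I_n predT x (fun i _ => x_ge0 i)).1.
rewrite cardT size_enum_ord in agm.
rewrite -[leRHS](powR_exprK mean_ge0 n_gt0) ge0_ler_powR ?invr_ge0 ?ler0n //.
  by rewrite nnegrE prodr_ge0.
by rewrite nnegrE exprn_ge0.
Qed.

Lemma sqnorm_dft (R : realType) L D (u : 'I_L -> 'rV[R]_D) : (0 < D)%N ->
  sqnorm u = \sum_(m < D) \sum_(l < L) normc (dft (crow (u l)) m) ^+ 2.
Proof.
move=> D_gt0; rewrite /sqnorm; under eq_bigr do rewrite (sum_sqr_dft D_gt0).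
exact: exchange_big.
Qed.

Lemma dft_Pconv_lower_bound (R : realType) L D (u : 'I_L -> 'rV[R]_D) m :
  (0 < L)%N -> (0 < D)%N ->
  L%:R * dft_abs (Pconv u) m `^ (2 / L%:R)
  <= \sum_(l < L) normc (dft (crow (u l)) m) ^+ 2.
Proof.
move=> L_gt0 D_gt0; rewrite dft_absE dft_Pconv // normc_prod.
rewrite -powR_invn_sqr ?prodr_ge0 // => [|l _]; last exact: normc_ge0.
by rewrite -prodrXl; apply: mean_ge_prod_powR => // l; apply: sqr_ge0.
Qed.

Lemma balanced_factorization (R : realType) L D (w : 'rV[R]_D) :
  (0 < L)%N -> (0 < D)%N ->
  exists u : 'I_L -> 'rV[R]_D, Pconv u = w /\
    forall l m, normc (dft (crow (u l)) m) = dft_abs w m `^ (L%:R^-1).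
Proof.
case: L => [//|n] _ D_gt0.
pose r m := dft_abs w m `^ (n.+1%:R^-1).
pose W := dft (crow w).
(* All factors get modulus [|w^|^(1/L)]; factor 0 also carries the phase of [w^]. *)
pose U (l : 'I_n.+1) m := if l == ord0 then W m / (r m ^+ n)%:C else (r m)%:C.
have r_ge0 m : 0 <= r m by apply: powR_ge0.
have norm_W m : normc (W m) = r m ^+ n.+1.
  by rewrite -dft_absE expr_powRK //; apply: sqrtr_ge0.
have split_W m := normc_divr_exprS (r_ge0 m) (norm_W m).
have herm_U l : hermitian D_gt0 (U l).
  have r_opp m : r (ord_opp D_gt0 m) = r m.
    by rewrite /r !dft_absE dft_crow_hermitian normc_conj.
  move=> m; rewrite /U r_opp; case: ifP => _; last by rewrite conjc_real.
  rewrite fmorph_div /W dft_crow_hermitian; congr (_ / _); exact: (esym (conjc_real _)).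
pose u l := real_idft (U l).
have dft_u l : dft (crow (u l)) = U l := dft_real_idft (herm_U l).
exists u; split=> [|l m]; last first.
  by rewrite dft_u /U; case: ifP => _; [case: (split_W m) | rewrite normc_real].
apply: crow_inj; apply: (can_inj (dftK D_gt0)); apply/funext => m.
rewrite dft_Pconv // big_ord_recl dft_u /U eqxx.
under eq_bigr => i _ do rewrite dft_u /U eq_sym (negbTE (neq_lift ord0 i)).
by rewrite prodr_const card_ord -rmorphXn; case: (split_W m).
Qed.

Unset Implicit Arguments.

Theorem lemma4 (R : realType) (L D : nat) (hL : (1 <= L)%N) (hD : (1 <= D)%N)
  (w : 'rV[R]_D) :
  (exists u : 'I_L -> 'rV[R]_D,
      Pconv u = w /\ sqnorm u = L%:R * quasinorm_pow w (2 / L%:R)) /\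
  (forall u : 'I_L -> 'rV[R]_D,
      Pconv u = w -> L%:R * quasinorm_pow w (2 / L%:R) <= sqnorm u).
Proof.
split; last first.
  move=> u <-; rewrite (sqnorm_dft _ hD) /quasinorm_pow mulr_sumr.
  by apply: ler_sum => m _; apply: dft_Pconv_lower_bound.
have [u [Pconv_u normc_u]] := balanced_factorization w hL hD.
exists u; split=> //; rewrite (sqnorm_dft _ hD) /quasinorm_pow mulr_sumr.
apply: eq_bigr => m _; under eq_bigr do rewrite normc_u sqr_powR_invn.
by rewrite sumr_const card_ord [RHS]mulr_natl.
Qed.
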